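(* For every wqo $A$ there exists $m\in\mathbb{N}$ such that $$1+\mathbf{h}(A)\;\le\;\mathbf{h}(\mathcal{P}_f(A))\;\le\;\begin{cases}2^{\mathbf{h}(A)} & \text{if } \mathbf{h}(A) \text{ is a limit ordinal},\\ 2^{\mathbf{h}(A)}\cdot m & \text{if } \mathbf{h}(A)\text{ is a successor ordinal.}\end{cases}$$
   Context: A quasi-order $(A,\le)$ is a well-quasi-order (wqo) if every infinite sequence $x_0,x_1,\dots$ in $A$ has indices $i<j$ with $x_i\le x_j$. For a wqo $A$, let $\mathrm{Bad}(A)$, $\mathrm{Dec}(A)$, $\mathrm{Inco}(A)$ be the trees of finite bad sequences (sequences with no $i<j$, $x_i\le x_j$), finite strictly decreasing sequences, and finite sequences of pairwise incomparable elements of $A$, respectively; the root is the empty sequence and the children of a sequence are its one-element extensions. These trees are well-founded; the rank of a node $s$ is $r(s)=\sup\{r(t)+1 : t \text{ a child of } s\}$. The maximal order type $\mathbf{o}(A)$, height $\mathbf{h}(A)$ and width $\mathbf{w}(A)$ are the ranks of the roots of $\mathrm{Bad}(A)$, $\mathrm{Dec}(A)$, $\mathrm{Inco}(A)$ respectively. $\mathcal{P}_f(A)$ denotes the set of finite subsets of $A$ ordered by the Hoare embedding: $S\le_H S'$ iff for every $a\in S$ there is $b\in S'$ with $a\le b$. Ordinal arithmetic (sum, product, exponentiation) is the usual one. *)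

(* Ordinals are represented as Brouwer trees with
   suprema indexed by arbitrary types, ordered by the standard
   (extensional) relation; arithmetic is defined by recursion on the
   right argument (successor / supremum clauses). *)
From Stdlib Require Import List.
Import ListNotations.

Inductive Ord : Type :=
| OZ : Ord
| OS : Ord -> Ord
| OL : forall (I : Type), (I -> Ord) -> Ord.

Inductive ole : Ord -> Ord -> Prop :=
| ole_Z : forall b, ole OZ b
| ole_S : forall a b, olt a b -> ole (OS a) b
| ole_L : forall I (f : I -> Ord) b, (forall i, ole (f i) b) -> ole (OL I f) b
with olt : Ord -> Ord -> Prop :=
| olt_S : forall a b, ole a b -> olt a (OS b)
| olt_L : forall a I (f : I -> Ord) i, olt a (f i) -> olt a (OL I f).

Definition oeq (a b : Ord) : Prop := ole a b /\ ole b a.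

Definition one : Ord := OS OZ.

Fixpoint onat (n : nat) : Ord :=
  match n with 0 => OZ | S n => OS (onat n) end.

Fixpoint oadd (a b : Ord) : Ord :=
  match b with
  | OZ => a
  | OS b' => OS (oadd a b')
  | OL J f => OL (option J)
                (fun o => match o with None => a | Some i => oadd a (f i) end)
  end.

Fixpoint omul (a b : Ord) : Ord :=
  match b with
  | OZ => OZ
  | OS b' => oadd (omul a b') a
  | OL J f => OL J (fun i => omul a (f i))
  end.

Fixpoint oexp2 (b : Ord) : Ord :=
  match b with
  | OZ => one
  | OS b' => omul (oexp2 b') (onat 2)
  | OL J f => OL (option J)
                (fun o => match o with None => one | Some i => oexp2 (f i) end)
  end.

Definition is_succ_ord (a : Ord) : Prop := exists b, oeq a (OS b).
Definition is_limit_ord (a : Ord) : Prop := ~ oeq a OZ /\ ~ is_succ_ord a.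

(* Existence of a rank at the
   root expresses well-foundedness of the tree below the root. *)
Inductive has_rank {T : Type} (child : T -> T -> Prop) : T -> Ord -> Prop :=
| HR : forall (s : T) (f : {t : T | child t s} -> Ord),
    (forall t, has_rank child (proj1_sig t) (f t)) ->
    has_rank child s (OL {t : T | child t s} (fun t => OS (f t))).

Definition wqo {A : Type} (le : A -> A -> Prop) : Prop :=
  forall f : nat -> A, exists i j, i < j /\ le (f i) (f j).

Definition strict {A : Type} (le : A -> A -> Prop) (x y : A) : Prop :=
  le x y /\ ~ le y x.

Fixpoint decreasing {A : Type} (le : A -> A -> Prop) (s : list A) : Prop :=
  match s with
  | [] => True
  | x :: s' => (forall y, In y s' -> strict le y x) /\ decreasing le s'
  end.

Definition dec_child {A : Type} (le : A -> A -> Prop) (t s : list A) : Prop :=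
  exists x, t = s ++ [x] /\ decreasing le t.

Definition height {A : Type} (le : A -> A -> Prop) (h : Ord) : Prop :=
  has_rank (dec_child le) [] h.

Definition Pf (A : Type) : Type :=
  { S : A -> Prop | exists l : list A, forall x, S x <-> In x l }.

Definition hoare {A : Type} (le : A -> A -> Prop) (S S' : Pf A) : Prop :=
  forall a, proj1_sig S a -> exists b, proj1_sig S' b /\ le a b.

From Stdlib Require Import List Arith Lia Classical ClassicalEpsilon.
Import ListNotations.

(* Write [rk a] for the rank of [a] in (A, <) and [srk S] for the rank of [S] in
   (P_f(A), <_H); every [rk a] is below h(A), and h(P_f(A)) is at most any strict
   upper bound of all [srk S].  By induction on [g] we bound [srk S] for the sets [S]
   whose elements all have rank [< g].  If [g] is zero or a limit and [mu] is the
   largest rank in [S], then [mu + 1 + k < g] for all [k], so the bound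
   [2^(mu+1) * m] at level [mu + 1] is below [2^g].  If [g = beta + 1], the elements
   of rank [beta] are pairwise not strictly comparable, hence form finitely many, say
   [k], equivalence classes since A is a wqo.  Counting the classes [c(S)] dominated
   by [S], and letting [F(S)] be the elements of [S] of rank [< beta] not below a
   rank-[beta] element of [S], the quantity [2^beta * m * c(S) + srk (F(S))] strictly
   decreases along <_H, which gives [srk S < 2^(beta+1) * m * (k + 1)].  For the
   lower bound, map a decreasing sequence of A to singletons and append the empty
   set. *)

Lemma ole_inv a c : ole a c ->
  match a with OZ => True | OS b => olt b c | OL J f => forall i, ole (f i) c end.
Proof. destruct 1; auto. Qed.

Lemma olt_inv a c : olt a c ->
  match c with OZ => False | OS b => ole a b | OL J f => exists i, olt a (f i) end.
Proof. destruct 1; eauto. Qed.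

Lemma ole_OL_intro y I (f : I -> Ord) i : ole y (f i) -> ole y (OL I f).
Proof.
  revert I f i; induction y as [|y IH|J g IH]; intros I f i H; apply ole_inv in H.
  - constructor.
  - constructor. eapply olt_L; eauto.
  - constructor. intros j. eapply IH; eauto.
Qed.

Lemma ole_refl a : ole a a.
Proof.
  induction a as [|a IH|I f IH]; constructor.
  - constructor. exact IH.
  - intros i. eapply ole_OL_intro. apply IH.
Qed.

(* The key to the mutual transitivity proof: an [olt] step can always be taken
   through a single [ole]-bounded predecessor. *)
Lemma olt_below_pred b c : olt b c -> exists c', ole b c' /\ forall x, ole x c' -> olt x c.
Proof.
  revert b; induction c as [|c IH|J g IH]; intros b H; apply olt_inv in H.
  - destruct H.
  - exists c. split; auto. intros; constructor; auto.
  - destruct H as [j Hj]. destruct (IH j b Hj) as [c' [H1 H2]].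
    exists c'. split; auto. intros x Hx. eapply olt_L. apply H2; auto.
Qed.

Scheme ole_mind := Induction for ole Sort Prop
with olt_mind := Induction for olt Sort Prop.

Lemma ole_olt_trans_mutual :
  (forall a b, ole a b -> forall c, ole b c -> ole a c) /\
  (forall a b, olt a b -> forall c, ole b c -> olt a c).
Proof.
  split;
  [ apply (ole_mind (fun a b _ => forall c, ole b c -> ole a c)
                    (fun a b _ => forall c, ole b c -> olt a c))
  | apply (olt_mind (fun a b _ => forall c, ole b c -> ole a c)
                    (fun a b _ => forall c, ole b c -> olt a c))].
  all: try (intros; constructor; fail).
  all: try (intros a b _ IH c H; constructor; apply IH; auto; fail).
  all: try (intros I f b _ IH c H; constructor; intros i; apply IH; auto; fail).
  all: try (intros a b _ IH c H; apply ole_inv in H;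
            destruct (olt_below_pred _ _ H) as [c' [H1 H2]]; apply H2, IH, H1; fail).
  all: intros a I f i _ IH c H; apply ole_inv in H; apply IH, H.
Qed.

Lemma ole_trans a b c : ole a b -> ole b c -> ole a c.
Proof. intros; eapply (proj1 ole_olt_trans_mutual); eauto. Qed.

Lemma olt_ole_trans a b c : olt a b -> ole b c -> olt a c.
Proof. intros; eapply (proj2 ole_olt_trans_mutual); eauto. Qed.

Lemma ole_olt_trans a b c : ole a b -> olt b c -> olt a c.
Proof.
  intros H1 H2. destruct (olt_below_pred _ _ H2) as [c' [H3 H4]].
  apply H4. eapply ole_trans; eauto.
Qed.

Lemma ole_OS a : ole a (OS a).
Proof.
  induction a as [|a IH|I f IH]; constructor.
  - constructor. exact IH.
  - intros i. eapply ole_trans; [apply IH|].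
    do 2 constructor. eapply ole_OL_intro. apply ole_refl.
Qed.

Lemma olt_ole a b : olt a b -> ole a b.
Proof. intros H. eapply ole_trans; [apply ole_OS|]. constructor. exact H. Qed.

Lemma OS_mono a b : ole a b -> ole (OS a) (OS b).
Proof. intros; do 2 constructor; auto. Qed.

Lemma ole_olt_total a b : (ole a b \/ olt b a) /\ (olt a b \/ ole b a).
Proof.
  revert b; induction a as [|a IHa|I f IHa]; intros b; split.
  - left; constructor.
  - induction b as [|b IHb|J g IHb].
    + right; constructor.
    + left. do 2 constructor.
    + destruct (classic (exists j, olt OZ (g j))) as [[j Hj]|Hn].
      * left. eapply olt_L; eauto.
      * right. constructor. intros j. destruct (IHb j); auto. exfalso; eauto.
  - destruct (IHa b) as [_ [H|H]]; [left|right]; constructor; auto.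
  - induction b as [|b IHb|J g IHb].
    + right; constructor.
    + destruct (IHa b) as [_ [H|H]]; [left|right]; do 2 constructor; auto.
    + destruct (classic (exists j, olt (OS a) (g j))) as [[j Hj]|Hn].
      * left. eapply olt_L; eauto.
      * right. constructor. intros j. destruct (IHb j); auto. exfalso; eauto.
  - destruct (classic (forall i, ole (f i) b)) as [H|H].
    + left; constructor; auto.
    + apply not_all_ex_not in H. destruct H as [i Hi].
      destruct (IHa i b) as [[H|H] _]; [contradiction|].
      right. eapply olt_L; eauto.
  - induction b as [|b IHb|J g IHb].
    + right; constructor.
    + destruct (classic (forall i, ole (f i) b)) as [H|H].
      * left. do 2 constructor. auto.
      * apply not_all_ex_not in H. destruct H as [i Hi].
        destruct (IHa i b) as [[H|H] _]; [contradiction|].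
        right. constructor. eapply olt_L; eauto.
    + destruct (classic (exists j, olt (OL I f) (g j))) as [[j Hj]|Hn].
      * left. eapply olt_L; eauto.
      * right. constructor. intros j. destruct (IHb j); auto. exfalso; eauto.
Qed.

Lemma not_ole_olt a b : ~ ole a b -> olt b a.
Proof. intros H. destruct (proj1 (ole_olt_total a b)); tauto. Qed.

Lemma not_olt_ole a b : ~ olt a b -> ole b a.
Proof. intros H. destruct (proj2 (ole_olt_total a b)); tauto. Qed.

Lemma OS_olt_not_succ y g : ole (OS y) g -> ~ is_succ_ord g -> olt (OS y) g.
Proof.
  intros H1 H2. apply NNPP; intros H3. apply H2. exists y. split; auto.
  apply not_olt_ole; auto.
Qed.

Lemma olt_wf : well_founded olt.
Proof.
  assert (H : forall g a, ole a g -> Acc olt a).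
  { induction g as [|g IH|I f IH]; intros a Ha; constructor; intros b Hb;
      pose proof (olt_inv _ _ (olt_ole_trans _ _ _ Hb Ha)) as Hbg.
    - destruct Hbg.
    - apply IH; auto.
    - destruct Hbg as [i Hi]. apply (IH i), olt_ole, Hi. }
  intros a. apply (H a), ole_refl.
Qed.

Lemma oadd_le_l a b : ole a (oadd a b).
Proof.
  induction b as [|b IH|J g IH]; simpl.
  - apply ole_refl.
  - eapply ole_trans; [exact IH|apply ole_OS].
  - apply (ole_OL_intro _ _ _ None), ole_refl.
Qed.

Lemma oadd_mono_r_mutual x :
  (forall a b, ole a b -> ole (oadd x a) (oadd x b)) /\
  (forall a b, olt a b -> olt (oadd x a) (oadd x b)).
Proof.
  split;
  [ apply (ole_mind (fun a b _ => ole (oadd x a) (oadd x b))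
                    (fun a b _ => olt (oadd x a) (oadd x b)))
  | apply (olt_mind (fun a b _ => ole (oadd x a) (oadd x b))
                    (fun a b _ => olt (oadd x a) (oadd x b)))]; simpl.
  all: try (intros; apply oadd_le_l; fail).
  all: try (intros a b _ IH; constructor; exact IH; fail).
  all: try (intros I f b _ IH; constructor; intros [i|]; [apply IH|apply oadd_le_l]; fail).
  all: intros a I f i _ IH; apply (olt_L _ _ _ (Some i)); exact IH.
Qed.

Lemma oadd_mono_r x a b : ole a b -> ole (oadd x a) (oadd x b).
Proof. apply oadd_mono_r_mutual. Qed.

Lemma oadd_smono_r x a b : olt a b -> olt (oadd x a) (oadd x b).
Proof. apply oadd_mono_r_mutual. Qed.

Lemma oadd_mono_l a a' b : ole a a' -> ole (oadd a b) (oadd a' b).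
Proof.
  intros H. induction b as [|b IH|J g IH]; simpl.
  - exact H.
  - apply OS_mono, IH.
  - constructor. intros [j|].
    + apply (ole_OL_intro _ _ _ (Some j)), IH.
    + apply (ole_OL_intro _ _ _ None), H.
Qed.

Lemma oadd_mono a a' b b' : ole a a' -> ole b b' -> ole (oadd a b) (oadd a' b').
Proof.
  intros; eapply ole_trans; [apply oadd_mono_l; eauto|apply oadd_mono_r; auto].
Qed.

Lemma oadd_assoc_le u v w : ole (oadd u (oadd v w)) (oadd (oadd u v) w).
Proof.
  induction w as [|w IH|J g IH]; simpl.
  - apply ole_refl.
  - apply OS_mono, IH.
  - constructor. intros [[j|]|].
    + apply (ole_OL_intro _ _ _ (Some j)), IH.
    + apply (ole_OL_intro _ _ _ None), ole_refl.
    + apply (ole_OL_intro _ _ _ None), oadd_le_l.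
Qed.

Lemma ole_oadd_OZ_l x : ole x (oadd OZ x).
Proof.
  induction x as [|x IH|J g IH]; simpl.
  - apply ole_refl.
  - apply OS_mono, IH.
  - constructor. intros j. apply (ole_OL_intro _ _ _ (Some j)), IH.
Qed.

Lemma oadd_le_r z y : ole y (oadd z y).
Proof. eapply ole_trans; [apply ole_oadd_OZ_l|]. apply oadd_mono_l. constructor. Qed.

Lemma omul_onat_mono_r x n m : n <= m -> ole (omul x (onat n)) (omul x (onat m)).
Proof.
  induction 1.
  - apply ole_refl.
  - eapply ole_trans; [exact IHle|]. apply oadd_le_l.
Qed.

Lemma omul_onat_mono_l x y n : ole x y -> ole (omul x (onat n)) (omul y (onat n)).
Proof. intros H; induction n; simpl; [constructor|apply oadd_mono; auto]. Qed.

Lemma omul_onat_add x p q :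
  ole (oadd (omul x (onat p)) (omul x (onat q))) (omul x (onat (p + q))).
Proof.
  induction q.
  - rewrite Nat.add_0_r. apply ole_refl.
  - rewrite Nat.add_succ_r. simpl.
    eapply ole_trans; [apply oadd_assoc_le|]. apply oadd_mono_l, IHq.
Qed.

Lemma omul_onat_mul x a b : ole (omul (omul x (onat a)) (onat b)) (omul x (onat (a * b))).
Proof.
  induction b.
  - rewrite Nat.mul_0_r. constructor.
  - rewrite Nat.mul_succ_r. simpl.
    eapply ole_trans; [apply oadd_mono_l, IHb|]. apply omul_onat_add.
Qed.

Lemma ole_omul_onat_1 x : ole x (omul x (onat 1)).
Proof. apply ole_oadd_OZ_l. Qed.

Lemma one_le_oexp2 b : ole one (oexp2 b).
Proof.
  induction b as [|b IH|J g IH]; simpl.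
  - apply ole_refl.
  - eapply ole_trans; [exact IH|]. apply oadd_le_r.
  - apply (ole_OL_intro _ _ _ None), ole_refl.
Qed.

Lemma oexp2_mono_mutual :
  (forall a b, ole a b -> ole (oexp2 a) (oexp2 b)) /\
  (forall a b, olt a b -> ole (oexp2 (OS a)) (oexp2 b)).
Proof.
  split;
  [ apply (ole_mind (fun a b _ => ole (oexp2 a) (oexp2 b))
                    (fun a b _ => ole (oexp2 (OS a)) (oexp2 b)))
  | apply (olt_mind (fun a b _ => ole (oexp2 a) (oexp2 b))
                    (fun a b _ => ole (oexp2 (OS a)) (oexp2 b)))].
  all: try (intros; apply one_le_oexp2; fail).
  all: try (intros a b _ IH; exact IH; fail).
  all: try (intros I f b _ IH; simpl; constructor; intros [i|];
            [apply IH|apply one_le_oexp2]; fail).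
  all: try (intros a b _ IH; apply (omul_onat_mono_l _ _ 2), IH; fail).
  all: intros a I f i _ IH; eapply ole_trans; [exact IH|];
       apply (ole_OL_intro _ _ _ (Some i)), ole_refl.
Qed.

Lemma oexp2_mono a b : ole a b -> ole (oexp2 a) (oexp2 b).
Proof. apply oexp2_mono_mutual. Qed.

Lemma oexp2_omul_onat_le a n : ole (omul (oexp2 a) (onat n)) (oexp2 (oadd a (onat n))).
Proof.
  induction n; simpl; [constructor|].
  apply oadd_mono.
  - eapply ole_trans; [exact IHn|]. apply ole_oadd_OZ_l.
  - apply oexp2_mono, oadd_le_l.
Qed.

Section Ranks.
Variables (T : Type) (child : T -> T -> Prop).

Lemma has_rank_inv s r : has_rank child s r ->
  exists f : {t : T | child t s} -> Ord, r = OL _ (fun t => OS (f t)) /\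
    forall t, has_rank child (proj1_sig t) (f t).
Proof. destruct 1; eauto. Qed.

Lemma rank_child_lt s r t : has_rank child s r -> child t s ->
  exists r', has_rank child t r' /\ olt r' r.
Proof.
  intros H Ht. destruct (has_rank_inv _ _ H) as [f [-> Hf]].
  exists (f (exist _ t Ht)). split; [apply (Hf (exist _ t Ht))|].
  apply (olt_L _ _ _ (exist _ t Ht)). constructor. apply ole_refl.
Qed.

Lemma rank_le_measure (P : T -> Prop) (g : T -> Ord) :
  (forall s t, P s -> child t s -> P t /\ olt (g t) (g s)) ->
  forall s r, has_rank child s r -> P s -> ole r (g s).
Proof.
  intros Hg s r H. induction H as [s f Hf IH]. intros Ps.
  constructor. intros [t Ht]. constructor.
  destruct (Hg s t Ps Ht) as [Pt Hlt].
  eapply ole_olt_trans; [apply (IH (exist _ t Ht)), Pt|exact Hlt].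
Qed.

Lemma has_rank_unique_le s r1 r2 : has_rank child s r1 -> has_rank child s r2 -> ole r1 r2.
Proof.
  intros H. revert r2. induction H as [s f Hf IH]. intros r2 H2.
  destruct (has_rank_inv _ _ H2) as [f2 [-> Hf2]].
  constructor. intros t. apply (ole_OL_intro _ _ _ t), OS_mono, IH, Hf2.
Qed.

Lemma has_rank_exists s : Acc child s -> exists r, has_rank child s r.
Proof.
  induction 1 as [s _ IH].
  set (f := fun t : {t : T | child t s} =>
        proj1_sig (constructive_indefinite_description _ (IH (proj1_sig t) (proj2_sig t)))).
  exists (OL _ (fun t => OS (f t))). constructor. intros t. apply proj2_sig.
Qed.

Definition rank (wf : forall s, Acc child s) (s : T) : Ord :=
  proj1_sig (constructive_indefinite_description _ (has_rank_exists s (wf s))).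

Lemma rank_spec wf s : has_rank child s (rank wf s).
Proof. unfold rank. apply proj2_sig. Qed.

Lemma rank_lt wf s t : child t s -> olt (rank wf t) (rank wf s).
Proof.
  intros Hts. destruct (rank_child_lt _ _ t (rank_spec wf s) Hts) as [r' [Hr Hlt]].
  eapply ole_olt_trans; [|exact Hlt]. eapply has_rank_unique_le; [apply rank_spec|exact Hr].
Qed.

End Ranks.

Lemma Acc_of_no_descending_chain {X} (R : X -> X -> Prop) :
  (forall f : nat -> X, ~ (forall n, R (f (S n)) (f n))) -> forall x, Acc R x.
Proof.
  intros H x. apply NNPP; intros Hx.
  assert (Hstep : forall y, ~ Acc R y -> exists z, R z y /\ ~ Acc R z).
  { intros y Hy. apply NNPP; intros Hn. apply Hy. constructor. intros z Hz.
    apply NNPP; intros Hz'. apply Hn; eauto. }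
  destruct (choice (fun y z => ~ Acc R y -> R z y /\ ~ Acc R z)) as [step Hs].
  { intros y. destruct (classic (Acc R y)) as [Hy|Hy].
    - exists y. tauto.
    - destruct (Hstep y Hy) as [z Hz]. exists z. auto. }
  set (f := fun n => Nat.iter n step x).
  assert (Hf : forall n, ~ Acc R (f n)) by (induction n; simpl; auto; apply (Hs _ IHn)).
  apply (H f). intros n. apply (Hs _ (Hf n)).
Qed.

Section DecreasingSequences.
Variables (X : Type) (le : X -> X -> Prop).
Hypothesis le_trans : forall x y z, le x y -> le y z -> le x z.

Lemma decreasing_app_inv l y :
  decreasing le (l ++ [y]) -> decreasing le l /\ forall x, In x l -> strict le y x.
Proof.
  induction l as [|a l IH]; simpl.
  - intros _; split; auto. intros x [].
  - intros [H1 H2]. destruct (IH H2) as [H3 H4]. split.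
    + split; auto. intros z Hz. apply H1, in_or_app; auto.
    + intros x [<-|Hx]; auto. apply H1, in_or_app; right; simpl; auto.
Qed.

Lemma decreasing_app_intro l y :
  decreasing le l -> (forall x, In x l -> strict le y x) -> decreasing le (l ++ [y]).
Proof.
  induction l as [|a l IH]; simpl.
  - intros _ _. split; auto. intros z [].
  - intros [H1 H2] H3. split; auto.
    intros z Hz. apply in_app_or in Hz. destruct Hz as [Hz|[<-|[]]]; auto.
Qed.

Lemma strict_trans x y z : strict le x y -> strict le y z -> strict le x z.
Proof. intros [H1 H2] [H3 H4]. split; eauto. Qed.

Lemma height_exists : (forall x, Acc (strict le) x) -> exists h, height le h.
Proof.
  intros wf. apply has_rank_exists.
  assert (H : forall x, Acc (strict le) x -> forall s, Acc (dec_child le) (s ++ [x])).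
  { induction 1 as [x _ IH]. intros s. constructor. intros t [y [-> Hd]].
    apply IH. apply (proj2 (decreasing_app_inv _ _ Hd)), in_or_app; right; simpl; auto. }
  constructor. intros t [y [-> _]]. apply (H y (wf y) []).
Qed.

Section RankBound.
Variables (rk : X -> Ord).
Hypothesis rk_strict : forall x y, strict le y x -> olt (rk y) (rk x).

Lemma dec_rank_le_last d : forall s r, has_rank (dec_child le) s r ->
  (exists s0 x, s = s0 ++ [x]) -> ole r (rk (last s d)).
Proof.
  apply (rank_le_measure _ _ (fun s => exists s0 x, s = s0 ++ [x]) (fun s => rk (last s d))).
  intros s t [s0 [x ->]] [y [-> Hd]]. split; eauto.
  rewrite !last_last. apply rk_strict, (proj2 (decreasing_app_inv _ _ Hd)).
  apply in_or_app; right; simpl; auto.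
Qed.

Lemma height_le_rank_bound bound h : (forall x, olt (rk x) bound) -> height le h -> ole h bound.
Proof.
  intros Hb Hh. destruct (has_rank_inv _ _ _ _ Hh) as [f [-> Hf]].
  constructor. intros [t Ht]. constructor.
  pose proof Ht as [y [Et _]].
  eapply ole_olt_trans; [apply (dec_rank_le_last y t _ (Hf (exist _ t Ht))); exists [], y; exact Et|].
  apply Hb.
Qed.

End RankBound.

Lemma rank_le_dec_rank x rho : has_rank (strict le) x rho ->
  forall s r, decreasing le (s ++ [x]) -> has_rank (dec_child le) (s ++ [x]) r -> ole rho r.
Proof.
  intros H. induction H as [x f Hf IH]. intros s r Hd Hr.
  constructor. intros [y Hy]. constructor.
  assert (Hd' : decreasing le ((s ++ [x]) ++ [y])).
  { apply decreasing_app_intro; auto. intros z Hz. apply in_app_or in Hz.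
    destruct Hz as [Hz|[<-|[]]]; auto.
    eapply strict_trans; eauto. apply (proj2 (decreasing_app_inv _ _ Hd)); auto. }
  destruct (rank_child_lt _ _ _ _ ((s ++ [x]) ++ [y]) Hr) as [r' [Hr' Hlt]].
  { exists y; split; auto. }
  eapply ole_olt_trans; [|exact Hlt]. apply (IH (exist _ y Hy) (s ++ [x])); auto.
Qed.

Lemma rank_lt_height x rho h : has_rank (strict le) x rho -> height le h -> olt rho h.
Proof.
  intros Hx Hh.
  assert (Hd : decreasing le [x]) by (split; [intros y []|exact I]).
  destruct (rank_child_lt _ _ _ _ [x] Hh) as [r' [Hr' Hlt]]; [exists x; auto|].
  eapply ole_olt_trans; [|exact Hlt]. apply (rank_le_dec_rank x rho Hx []); auto.
Qed.

End DecreasingSequences.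

Lemma list_max {X} (g : X -> Ord) (l : list X) : l <> [] ->
  exists a0, In a0 l /\ forall a, In a l -> ole (g a) (g a0).
Proof.
  induction l as [|a l IH]; intros Hne; [congruence|].
  destruct l as [|b l'].
  - exists a. split; simpl; auto. intros x [<-|[]]. apply ole_refl.
  - destruct IH as [a0 [H1 H2]]; [congruence|].
    destruct (classic (ole (g a) (g a0))) as [Hc|Hc].
    + exists a0. split; [right; auto|]. intros x [<-|Hx]; auto.
    + apply not_ole_olt in Hc. exists a. split; [left; auto|]. intros x [<-|Hx].
      * apply ole_refl.
      * eapply ole_trans; [apply H2; auto|apply olt_ole; auto].
Qed.

Lemma fresh_sequence {X} (P : X -> Prop) (R : X -> X -> Prop) :
  (forall L, (forall r, In r L -> P r) -> exists a, P a /\ forall r, In r L -> ~ R a r) ->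
  exists u : nat -> X, (forall n, P (u n)) /\ forall i j, i < j -> ~ R (u j) (u i).
Proof.
  intros Hfresh.
  destruct (Hfresh [] (fun r Hr => match Hr with end)) as [a0 _].
  destruct (choice (fun L a => (forall r, In r L -> P r) -> P a /\ forall r, In r L -> ~ R a r))
    as [next Hnext].
  { intros L. destruct (classic (forall r, In r L -> P r)) as [HL|HL].
    - destruct (Hfresh L HL) as [a Ha]. exists a. auto.
    - exists a0. tauto. }
  set (prefix := fun n => Nat.iter n (fun L => next L :: L) []).
  assert (Hpre : forall n r, In r (prefix n) -> P r).
  { induction n as [|n IH]; simpl; intros r Hr; [destruct Hr|].
    destruct Hr as [<-|Hr]; auto. apply Hnext, IH. }
  assert (Hin : forall i j, i < j -> In (next (prefix i)) (prefix j)).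
  { intros i j Hij; induction Hij; simpl; auto. }
  exists (fun n => next (prefix n)). split.
  - intros n. apply Hnext, Hpre.
  - intros i j Hij. apply (Hnext _ (Hpre j)), Hin, Hij.
Qed.

Section Counting.
Variable X : Type.

Fixpoint count_sat (P : X -> Prop) (l : list X) : nat :=
  match l with
  | [] => 0
  | r :: l' => if excluded_middle_informative (P r) then S (count_sat P l') else count_sat P l'
  end.

Lemma count_sat_le P P' l : (forall r, In r l -> P r -> P' r) -> count_sat P l <= count_sat P' l.
Proof.
  induction l as [|r l IH]; simpl; intros Hs; auto.
  specialize (IH (fun x Hx => Hs x (or_intror Hx))).
  destruct (excluded_middle_informative (P r)), (excluded_middle_informative (P' r)); try lia.
  exfalso; eauto.
Qed.

Lemma count_sat_eq P P' l : (forall r, In r l -> P r -> P' r) ->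
  count_sat P l = count_sat P' l -> forall r, In r l -> P' r -> P r.
Proof.
  induction l as [|r l IH]; simpl; intros Hs He x Hx HP'; [destruct Hx|].
  assert (Hs' : forall x, In x l -> P x -> P' x) by eauto.
  pose proof (count_sat_le _ _ _ Hs') as Hle.
  destruct (excluded_middle_informative (P r)), (excluded_middle_informative (P' r)).
  - destruct Hx as [<-|Hx]; eauto.
  - exfalso; eauto.
  - lia.
  - destruct Hx as [<-|Hx]; [contradiction|eauto].
Qed.

Lemma count_sat_length P l : count_sat P l <= length l.
Proof.
  induction l as [|r l IH]; simpl; auto.
  destruct (excluded_middle_informative (P r)); lia.
Qed.

End Counting.

Definition mem {A} (S : Pf A) (a : A) : Prop := proj1_sig S a.

Lemma sfilter_finite {A} (P : A -> Prop) (S : Pf A) :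
  exists l, forall x, (mem S x /\ P x) <-> In x l.
Proof.
  destruct (proj2_sig S) as [l Hl].
  exists (filter (fun x => if excluded_middle_informative (P x) then true else false) l).
  intros x. rewrite filter_In. unfold mem. rewrite Hl.
  destruct (excluded_middle_informative (P x)); intuition congruence.
Qed.

Definition sfilter {A} (P : A -> Prop) (S : Pf A) : Pf A :=
  exist _ (fun x => mem S x /\ P x) (sfilter_finite P S).

Lemma sempty_finite {A} : exists l : list A, forall y : A, False <-> In y l.
Proof. exists []. intros y; simpl; tauto. Qed.

Definition sempty {A} : Pf A := exist _ (fun _ => False) sempty_finite.

Lemma singleton_finite {A} (x : A) : exists l, forall y, y = x <-> In y l.
Proof. exists [x]. intros y; simpl; intuition. Qed.

Definition singleton {A} (x : A) : Pf A := exist _ (fun y => y = x) (singleton_finite x).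

Section QuasiOrder.
Variables (A : Type) (le : A -> A -> Prop).
Hypothesis le_refl : forall x, le x x.
Hypothesis le_trans : forall x y z, le x y -> le y z -> le x z.

Lemma hoare_refl S : hoare le S S.
Proof. intros a Ha; eauto. Qed.

Lemma hoare_trans S1 S2 S3 : hoare le S1 S2 -> hoare le S2 S3 -> hoare le S1 S3.
Proof.
  intros H1 H2 a Ha. destruct (H1 a Ha) as [b [Hb Hab]].
  destruct (H2 b Hb) as [c [Hc Hbc]]. eauto.
Qed.

Lemma singleton_strict x y : strict le y x -> strict (hoare le) (singleton y) (singleton x).
Proof.
  intros [H1 H2]. split.
  - intros a Ha. exists x. split; [reflexivity|]. simpl in Ha. subst; auto.
  - intros Hc. destruct (Hc x eq_refl) as [b [Hb Hxb]]. simpl in Hb. subst; auto.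
Qed.

Lemma decreasing_map_singleton s : decreasing le s -> decreasing (hoare le) (map singleton s).
Proof.
  induction s as [|x s IH]; simpl; auto. intros [H1 H2]. split; auto.
  intros Y HY. apply in_map_iff in HY. destruct HY as [y [<- Hy]].
  apply singleton_strict, H1, Hy.
Qed.

(* Below the singleton image of a decreasing sequence one can always append [sempty],
   which accounts for the summand [one]. *)
Lemma one_add_rank_le_rank_singletons s r1 : has_rank (dec_child le) s r1 -> decreasing le s ->
  forall r2, has_rank (dec_child (hoare le)) (map singleton s) r2 -> ole (oadd one r1) r2.
Proof.
  intros Hr. induction Hr as [s f Hf IH]. intros Hd r2 Hr2. simpl.
  constructor. intros [[t Ht]|]; constructor.
  - pose proof Ht as [y [Et Hdt]]. subst t.
    destruct (rank_child_lt _ _ _ _ (map singleton (s ++ [y])) Hr2) as [r' [Hr' Hlt]].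
    { exists (singleton y). rewrite map_app. split; auto.
      rewrite <- map_app. apply decreasing_map_singleton; auto. }
    eapply ole_olt_trans; [|exact Hlt]. apply (IH (exist (fun t => dec_child le t s) _ Ht)); auto.
  - destruct (rank_child_lt _ _ _ _ (map singleton s ++ [sempty]) Hr2) as [r' [Hr' Hlt]].
    { exists sempty. split; auto. apply decreasing_app_intro.
      - apply decreasing_map_singleton; auto.
      - intros X HX. apply in_map_iff in HX. destruct HX as [y [<- _]]. split.
        + intros a [].
        + intros Hc. destruct (Hc y eq_refl) as [b [[] _]]. }
    eapply ole_olt_trans; [|exact Hlt]. constructor.
Qed.

Hypothesis le_wqo : wqo le.

Lemma strict_wf x : Acc (strict le) x.
Proof.
  revert x. apply Acc_of_no_descending_chain. intros f Hf.
  destruct (le_wqo f) as [i [j [Hij Hle]]].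
  assert (Hc : forall k, S i <= k -> le (f k) (f (S i))).
  { induction 1; auto. eapply le_trans; [apply (Hf m)|auto]. }
  apply (proj2 (Hf i)). eapply le_trans; [exact Hle|]. apply Hc; lia.
Qed.

Lemma hoare_strict_wf S : Acc (strict (hoare le)) S.
Proof.
  revert S. apply Acc_of_no_descending_chain. intros f Hf.
  assert (Hx : forall n, exists a, mem (f n) a /\ forall b, mem (f (S n)) b -> ~ le a b).
  { intros n. apply NNPP; intros Hn. apply (proj2 (Hf n)).
    intros a Ha. apply NNPP; intros Hb. apply Hn. exists a. split; auto.
    intros b Hb' Hab. apply Hb. exists b; auto. }
  destruct (choice _ Hx) as [x Hxs].
  destruct (le_wqo x) as [i [j [Hij Hle]]].
  assert (Hc : forall k, S i <= k -> hoare le (f k) (f (S i))).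
  { induction 1; [apply hoare_refl|]. eapply hoare_trans; [apply (Hf m)|auto]. }
  destruct (Hc j ltac:(lia) (x j) (proj1 (Hxs j))) as [b [Hb Hjb]].
  apply ((proj2 (Hxs i)) b Hb). eauto.
Qed.

Lemma wqo_finite_classes (P : A -> Prop) : (forall x y, P x -> P y -> ~ strict le x y) ->
  exists L, (forall r, In r L -> P r) /\ forall a, P a -> exists r, In r L /\ le a r /\ le r a.
Proof.
  intros Hanti. apply NNPP; intros Hno.
  destruct (fresh_sequence P (fun a r => le a r /\ le r a)) as [u [HuP Hu]].
  { intros L HL. apply NNPP; intros Hc. apply Hno. exists L. split; auto.
    intros a Ha. apply NNPP; intros Hd. apply Hc. exists a. split; auto.
    intros r Hr Har. apply Hd. exists r. tauto. }
  destruct (le_wqo u) as [i [j [Hij Hle]]].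
  apply (Hanti (u i) (u j)); auto. split; auto. intros Hji. apply (Hu i j); auto.
Qed.

Definition rk : A -> Ord := rank _ (strict le) strict_wf.
Definition srk : Pf A -> Ord := rank _ (strict (hoare le)) hoare_strict_wf.

Lemma rk_lt x y : strict le y x -> olt (rk y) (rk x).
Proof. apply rank_lt. Qed.

Lemma srk_lt S T : strict (hoare le) T S -> olt (srk T) (srk S).
Proof. apply rank_lt. Qed.

Lemma rk_mono x y : le y x -> ole (rk y) (rk x).
Proof.
  intros H. destruct (has_rank_inv _ _ _ _ (rank_spec _ _ strict_wf y)) as [f [Hy Hf]].
  unfold rk. rewrite Hy. constructor. intros [z Hz]. constructor.
  eapply ole_olt_trans; [eapply has_rank_unique_le; [apply (Hf (exist _ z Hz))|apply rank_spec]|].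
  apply rk_lt. pose proof Hz as [H1 H2]. split; eauto.
Qed.

Definition bounded (g : Ord) (S : Pf A) : Prop := forall a, mem S a -> olt (rk a) g.

Lemma bounded_hoare g S T : hoare le T S -> bounded g S -> bounded g T.
Proof.
  intros HTS HS a Ha. destruct (HTS a Ha) as [b [Hb Hab]].
  eapply ole_olt_trans; [apply rk_mono; exact Hab|apply HS; exact Hb].
Qed.

Definition srk_bound (g : Ord) : Prop :=
  exists m, forall S, bounded g S -> olt (srk S) (omul (oexp2 g) (onat m)).

Lemma srk_empty S : (forall a, ~ mem S a) -> ole (srk S) OZ.
Proof.
  intros HS. destruct (has_rank_inv _ _ _ _ (rank_spec _ _ hoare_strict_wf S)) as [f [E _]].
  unfold srk. rewrite E. constructor. intros [T HT].
  exfalso. apply (proj2 HT). intros a Ha. exfalso; eapply HS; eauto.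
Qed.

Lemma max_rank_exists S : (exists a, mem S a) ->
  exists a0, mem S a0 /\ forall a, mem S a -> ole (rk a) (rk a0).
Proof.
  intros [a Ha]. destruct (proj2_sig S) as [l Hl].
  destruct (list_max rk l) as [a0 [H1 H2]].
  { intros E. apply (proj1 (Hl a)) in Ha. rewrite E in Ha. destruct Ha. }
  exists a0. split; [apply Hl; auto|]. intros x Hx. apply H2, Hl, Hx.
Qed.

Lemma srk_lt_oexp2_not_succ g : ~ is_succ_ord g -> (forall d, olt d g -> srk_bound d) ->
  forall S, bounded g S -> olt (srk S) (oexp2 g).
Proof.
  intros Hns HC S HS.
  destruct (classic (exists a, mem S a)) as [Hne|He].
  - destruct (max_rank_exists S Hne) as [a0 [Ha0 Hmax]].
    assert (Hk : forall k, olt (oadd (OS (rk a0)) (onat k)) g).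
    { induction k; apply OS_olt_not_succ; auto; constructor; auto. }
    destruct (HC (OS (rk a0)) (Hk 0)) as [m Hm].
    eapply olt_ole_trans; [apply Hm; intros a Ha; constructor; apply Hmax, Ha|].
    eapply ole_trans; [apply oexp2_omul_onat_le|]. apply oexp2_mono, olt_ole, Hk.
  - eapply ole_olt_trans; [apply srk_empty; intros a Ha; apply He; eauto|].
    eapply olt_ole_trans; [|apply one_le_oexp2]. do 2 constructor.
Qed.

Section SuccessorLevel.
Variables (beta : Ord) (m0 : nat) (L : list A).
Hypothesis srk_lt_beta : forall U, bounded beta U -> olt (srk U) (omul (oexp2 beta) (onat m0)).
Hypothesis L_top : forall r, In r L -> ~ olt (rk r) beta.
Hypothesis L_classes : forall a, ole (rk a) beta -> ~ olt (rk a) beta ->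
  exists r, In r L /\ le a r /\ le r a.

Definition covers (U : Pf A) (r : A) : Prop := exists s, mem U s /\ le r s.
Definition ncovered (U : Pf A) : nat := count_sat _ (covers U) L.
Definition dominated (U : Pf A) (x : A) : Prop :=
  exists t, mem U t /\ ~ olt (rk t) beta /\ le x t.
Definition low_part (U : Pf A) : Pf A :=
  sfilter (fun x => olt (rk x) beta /\ ~ dominated U x) U.
(* Lexicographic: [srk (low_part U)] is below the unit [2^beta * m0] of the first summand. *)
Definition level_measure (U : Pf A) : Ord :=
  oadd (omul (omul (oexp2 beta) (onat m0)) (onat (ncovered U))) (srk (low_part U)).

Lemma covers_hoare U V r : hoare le V U -> covers V r -> covers U r.
Proof. intros HVU [s [Hs Hrs]]. destruct (HVU s Hs) as [b [Hb Hsb]]. exists b; eauto. Qed.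

Lemma ncovered_mono U V : hoare le V U -> ncovered V <= ncovered U.
Proof. intros HVU. apply count_sat_le. intros r _. apply covers_hoare, HVU. Qed.

(* Equal counts mean that [V] still covers every class of top rank covered by [U]. *)
Lemma dominated_hoare U V : bounded (OS beta) U -> hoare le V U -> ncovered V = ncovered U ->
  forall x, dominated U x -> dominated V x.
Proof.
  intros HU HVU Hc x [t [Ht [Htb Hxt]]].
  destruct (L_classes t (olt_inv _ _ (HU t Ht)) Htb) as [r [Hr [Htr Hrt]]].
  destruct (count_sat_eq _ _ _ _ (fun r _ => covers_hoare U V r HVU) Hc r Hr) as [s [Hs Hrs]].
  { exists t; auto. }
  exists s. split; [exact Hs|]. split; [|eauto].
  intros Hsb. apply (L_top r Hr). eapply ole_olt_trans; [apply rk_mono, Hrs|exact Hsb].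
Qed.

Lemma low_part_strict U V : bounded (OS beta) U -> strict (hoare le) V U ->
  ncovered V = ncovered U -> strict (hoare le) (low_part V) (low_part U).
Proof.
  intros HU [HVU HUV] Hc.
  assert (Hdom := dominated_hoare U V HU HVU Hc). split.
  - intros x [HxV [_ Hxn]]. destruct (HVU x HxV) as [b [Hb Hxb]].
    assert (Hbn : ~ dominated U b) by (intros [t Ht]; apply Hxn, Hdom; exists t; intuition eauto).
    exists b. split; [|exact Hxb]. split; [exact Hb|]. split; [|exact Hbn].
    apply NNPP; intros Hbb. apply Hbn. exists b. auto.
  - intros Hlow. apply HUV. intros s Hs.
    destruct (classic (dominated U s)) as [Hd|Hnd].
    + destruct (Hdom s Hd) as [t [Ht [_ Hst]]]. eauto.
    + destruct (Hlow s) as [x [[HxV _] Hsx]]; [|eauto].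
      split; [exact Hs|]. split; [|exact Hnd].
      apply NNPP; intros Hsb. apply Hnd. exists s. auto.
Qed.

Lemma level_measure_lt U V : bounded (OS beta) U -> strict (hoare le) V U ->
  olt (level_measure V) (level_measure U).
Proof.
  intros HU HVU. unfold level_measure.
  destruct (Nat.eq_dec (ncovered V) (ncovered U)) as [Heq|Hne].
  - rewrite Heq. apply oadd_smono_r, srk_lt, low_part_strict; auto.
  - assert (Hlt : ncovered V < ncovered U) by (pose proof (ncovered_mono U V (proj1 HVU)); lia).
    eapply olt_ole_trans; [apply oadd_smono_r, srk_lt_beta; intros a Ha; apply Ha|].
    eapply ole_trans; [apply (omul_onat_mono_r _ (S (ncovered V))), Hlt|]. apply oadd_le_l.
Qed.

Lemma srk_bound_succ_level : srk_bound (OS beta).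
Proof.
  exists (m0 * S (length L)). intros U HU.
  eapply ole_olt_trans.
  { apply (rank_le_measure _ (strict (hoare le)) (bounded (OS beta)) level_measure); [|apply rank_spec|exact HU].
    intros W V HW HVW. split; [exact (bounded_hoare _ _ _ (proj1 HVW) HW)|]. apply level_measure_lt; auto. }
  eapply olt_ole_trans; [apply oadd_smono_r, srk_lt_beta; intros a Ha; apply Ha|].
  eapply ole_trans; [apply (omul_onat_mono_r _ (S (ncovered U)) (S (length L)))|].
  { pose proof (count_sat_length _ (covers U) L). unfold ncovered. lia. }
  eapply ole_trans; [apply omul_onat_mul|].
  apply omul_onat_mono_l, oexp2_mono, ole_OS.
Qed.

End SuccessorLevel.

Lemma srk_bound_OS beta : srk_bound beta -> srk_bound (OS beta).
Proof.
  intros [m0 Hm0].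
  destruct (wqo_finite_classes (fun a => ole (rk a) beta /\ ~ olt (rk a) beta)) as [L [HL1 HL2]].
  { intros x y [_ Hx] [Hy _] Hxy. apply Hx. eapply olt_ole_trans; [apply rk_lt, Hxy|exact Hy]. }
  apply (srk_bound_succ_level beta m0 L Hm0).
  - intros r Hr. apply (HL1 r Hr).
  - intros a Ha1 Ha2. apply HL2. auto.
Qed.

Lemma srk_bound_oeq g g' : oeq g g' -> srk_bound g' -> srk_bound g.
Proof.
  intros [H1 H2] [m Hm]. exists m. intros S HS.
  eapply olt_ole_trans; [apply Hm; intros a Ha; eapply olt_ole_trans; [apply HS, Ha|exact H1]|].
  apply omul_onat_mono_l, oexp2_mono, H2.
Qed.

Lemma srk_bound_all g : srk_bound g.
Proof.
  induction g as [g IH] using (well_founded_ind olt_wf).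
  destruct (classic (is_succ_ord g)) as [[beta Hb]|Hns].
  - apply (srk_bound_oeq _ _ Hb), srk_bound_OS, IH.
    eapply olt_ole_trans; [constructor; apply ole_refl|apply (proj2 Hb)].
  - exists 1. intros S HS. eapply olt_ole_trans; [apply srk_lt_oexp2_not_succ; eauto|apply ole_omul_onat_1].
Qed.

Lemma height_hoare_le hA hP X : height le hA -> height (hoare le) hP ->
  (forall S, bounded hA S -> olt (srk S) X) -> ole hP X.
Proof.
  intros HA HP HX. apply (height_le_rank_bound _ _ srk srk_lt X); auto.
  intros S. apply HX. intros a _. apply (rank_lt_height _ _ le_trans a); auto. apply rank_spec.
Qed.

End QuasiOrder.

Theorem mainTheorem2 (A : Type) (le : A -> A -> Prop)
  (le_refl : forall x, le x x)
  (le_trans : forall x y z, le x y -> le y z -> le x z)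
  (Hwqo : wqo le) :
  exists hA hP : Ord,
    height le hA /\ height (hoare le) hP /\
    exists m : nat,
      ole (oadd one hA) hP /\
      (is_limit_ord hA -> ole hP (oexp2 hA)) /\
      (is_succ_ord hA -> ole hP (omul (oexp2 hA) (onat m))).
Proof.
  destruct (height_exists _ _ (strict_wf A le le_refl le_trans Hwqo)) as [hA HA].
  destruct (height_exists _ _ (hoare_strict_wf A le le_refl le_trans Hwqo)) as [hP HP].
  destruct (srk_bound_all A le le_refl le_trans Hwqo hA) as [m Hm].
  exists hA, hP. split; [exact HA|]. split; [exact HP|]. exists m. split; [|split].
  - exact (one_add_rank_le_rank_singletons A le [] hA HA I hP HP).
  - intros [_ Hns]. apply (height_hoare_le A le le_refl le_trans Hwqo hA hP _ HA HP).
    apply srk_lt_oexp2_not_succ; auto. intros d _. apply srk_bound_all.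
  - intros _. exact (height_hoare_le A le le_refl le_trans Hwqo hA hP _ HA HP Hm).
Qed.
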